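(* Let $A$ be a commutative unital ring, let $R$ be a positive totally ordered aura with tempered growth, and let $|\cdot|:A\to R$ be a power-multiplicative generalized seminorm. Then $|\cdot|$ is pre-archimedean, i.e. $$|a+b|\leq \max(|2|,1)\cdot\max(|a|,|b|)\quad\text{for all }a,b\in A,$$ where $2=1+1\in A$. If moreover $|2|>1$, then the restriction $|\cdot|_{|\mathbb{Z}}$ (the composite $\mathbb{Z}\to A\xrightarrow{|\cdot|}R$ of the canonical ring map with $|\cdot|$) is multiplicatively equivalent to the archimedean seminorm $|\cdot|_\infty:\mathbb{Z}\to\mathbb{Q}_{+}$, $|n|_\infty=\max(n,-n)$.
   Context: All semirings are commutative and unital. A halo is a semiring with a partial order $\leq$ compatible with its operations: $x\leq z$ and $y\leq t$ imply $xy\leq zt$ and $x+y\leq z+t$. A halo morphism $f:A\to B$ is an increasing map with $f(0)=0$, $f(1)=1$, $f(a+b)\leq f(a)+f(b)$ and $f(ab)\leq f(a)f(b)$. A ring is regarded as a halo with the trivial (equality) order. An aura is a halo whose underlying semiring is a semifield; it is positive if $0<1$. For $n\in\mathbb{N}$, $n$ also denotes $1+\dots+1$ ($n$ times) in any semiring. A halo $R$ has tempered growth if for every non-zero polynomial $P\in\mathbb{N}[X]$ and every $x\in R$, ($x^n\leq P(n)$ in $R$ for all $n\in\mathbb{N}$) implies $x\leq 1$. A generalized seminorm on a ring $A$ is a halo morphism $|\cdot|:A\to R$ into a positive totally ordered aura $R$; it is power-multiplicative if $|a^n|=|a|^n$ for all $a\in A$, $n\in\mathbb{N}$. The set $\mathbb{Q}_+$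 of non-negative rationals with usual operations and order is a positive totally ordered aura. Given halo morphisms $|\cdot|_1:A\to R$, $|\cdot|_2:A\to S$, write $|\cdot|_1\leq_m|\cdot|_2$ if for all $a,b,c\in A$, $|a|_2|c|_2\leq|b|_2$ implies $|a|_1|c|_1\leq|b|_1$; they are multiplicatively equivalent if $|\cdot|_1\leq_m|\cdot|_2$ and $|\cdot|_2\leq_m|\cdot|_1$. *)

From HB Require Import structures.
From mathcomp Require Import all_boot all_order all_algebra.
Set Implicit Arguments. Unset Strict Implicit. Unset Printing Implicit Defensive.
Import Order.TTheory GRing.Theory Num.Theory.
Local Open Scope ring_scope.

Definition halo_order (R : comPzSemiRingType) (le : rel R) : Prop :=
  [/\ (forall x, le x x),
      (forall x y, le x y -> le y x -> x = y),
      (forall x y z, le x y -> le y z -> le x z),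
      (forall x y z t, le x z -> le y t -> le (x + y) (z + t)) &
      (forall x y z t, le x z -> le y t -> le (x * y) (z * t))].

Definition lt_of (R : Type) (le : rel R) (x y : R) : Prop := le x y /\ x <> y.

Definition is_semifield (R : comPzSemiRingType) : Prop :=
  (0 : R) <> 1 /\ forall x : R, x <> 0 -> exists y, x * y = 1.

Definition pos_tot_aura (R : comPzSemiRingType) (le : rel R) : Prop :=
  [/\ halo_order le, is_semifield R,
      (forall x y, le x y \/ le y x) & lt_of le 0 1].

Definition maxo (R : Type) (le : rel R) (x y : R) : R := if le x y then y else x.

(* tempered growth; polynomials in N[X] are {poly nat}, P(n) is evaluated in N
   and then mapped to R by the canonical semiring map n |-> 1+...+1 *)
Definition tempered_growth (R : comPzSemiRingType) (le : rel R) : Prop :=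
  forall (P : {poly nat}) (x : R), P != 0 ->
    (forall n : nat, le (x ^+ n) ((P.[n])%:R)) -> le x 1.

(* halo morphism from a ring A (trivial order, so monotonicity is automatic) *)
Definition halo_morphism_ring (A : comPzRingType) (R : comPzSemiRingType)
  (le : rel R) (f : A -> R) : Prop :=
  [/\ f 0 = 0, f 1 = 1,
      (forall a b, le (f (a + b)) (f a + f b)) &
      (forall a b, le (f (a * b)) (f a * f b))].

Definition gen_seminorm (A : comPzRingType) (R : comPzSemiRingType)
  (le : rel R) (f : A -> R) : Prop :=
  pos_tot_aura le /\ halo_morphism_ring le f.

Definition power_mult (A : comPzRingType) (R : comPzSemiRingType) (f : A -> R) : Prop :=
  forall (a : A) (n : nat), f (a ^+ n) = f a ^+ n.

Definition mult_le (A : Type) (R S : comPzSemiRingType) (leR : rel R) (leS : rel S)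
  (f1 : A -> R) (f2 : A -> S) : Prop :=
  forall a b c : A, leS (f2 a * f2 c) (f2 b) -> leR (f1 a * f1 c) (f1 b).

Definition mult_equiv (A : Type) (R S : comPzSemiRingType) (leR : rel R) (leS : rel S)
  (f1 : A -> R) (f2 : A -> S) : Prop :=
  mult_le leR leS f1 f2 /\ mult_le leS leR f2 f1.

Definition abs_infty (n : int) : rat := (Num.max n (- n))%:~R.

Definition rat_le : rel rat := fun x y => x <= y.

From HB Require Import structures.
From mathcomp Require Import all_boot all_order all_algebra.
From mathcomp Require Import zify ring.
Import Order.TTheory GRing.Theory Num.Theory.
Set Implicit Arguments. Unset Strict Implicit. Unset Printing Implicit Defensive.
Local Open Scope ring_scope.

(* Tempered growth upgrades polynomially lossy bounds to sharp ones: if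
   |x|^n <= P(n) |y|^n for all n, then |x| <= |y|.  Since |.| is
   power-multiplicative it suffices to bound |(a+b)^n| up to a polynomial
   factor; expanding binomially and writing each C(n,i) < 2^(n+1) in base 2
   gives |(a+b)^n| <= 4 (n+1)^2 (max(|2|,1) max(|a|,|b|))^n.
   When |2| > 1, the same digit argument in base n shows |m| <= max(|n|,1)
   for m <= n, hence |.| is monotone on N with |n| >= 1; squeezing m^j and
   n^j between consecutive powers of 2 gives |mn| = |m||n|; and
   2 m^m <= (m+1)^m <= n^m for m < n forces |m| < |n|.  Thus |.| is a
   multiplicative order embedding of N and, as |-1| = 1, |a||c| <= |b| holds
   in R exactly when it holds for the archimedean absolute value. *)

Lemma leq_bin_exp2 n i : ('C(n, i) <= 2 ^ n)%N.
Proof.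
elim: n i => [|n IH] [|i] //; first by rewrite bin0 expn_gt0.
by rewrite binS expnS mul2n -addnn leq_add.
Qed.

Lemma leq_double_expnS m : (0 < m)%N -> (2 * m ^ m <= m.+1 ^ m)%N.
Proof.
case: m => // k _; rewrite -[k.+2]addn1 expnDn !big_ord_recl /= bin0 bin1 subn0 subn1 /=.
by rewrite !exp1n !muln1 !mul1n -expnS addnA addnn -mul2n leq_addr.
Qed.

Section PositiveTotallyOrderedAura.

Variables (R : comPzSemiRingType) (le : rel R).
Hypothesis hR : pos_tot_aura le.

Lemma aura_le_refl x : le x x.
Proof. by case: hR => -[]. Qed.

Lemma aura_le_anti x y : le x y -> le y x -> x = y.
Proof. by case: hR => -[_ anti _ _ _] _ _ _; apply: anti. Qed.

Lemma aura_le_trans y x z : le x y -> le y z -> le x z.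
Proof. by case: hR => -[_ _ htr _ _] _ _ _; apply: htr. Qed.

Lemma aura_lerD x y z t : le x z -> le y t -> le (x + y) (z + t).
Proof. by case: hR => -[_ _ _ add _] _ _ _; apply: add. Qed.

Lemma aura_lerM x y z t : le x z -> le y t -> le (x * y) (z * t).
Proof. by case: hR => -[_ _ _ _ mul] _ _ _; apply: mul. Qed.

Lemma aura_le_total x y : le x y \/ le y x.
Proof. by case: hR. Qed.

Lemma aura_le01 : le 0 1.
Proof. by case: hR => _ _ _ []. Qed.

Lemma aura_oner_neq0 : (1 : R) <> 0.
Proof. by case: hR => _ [/nesym]. Qed.

Lemma aura_invertible (x : R) : x <> 0 -> exists y, x * y = 1.
Proof. by case: hR => _ [_ inv] _ _; apply: inv. Qed.

Lemma aura_ge0 x : le 0 x.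
Proof. by have := aura_lerM (aura_le_refl x) aura_le01; rewrite mulr0 mulr1. Qed.

Lemma aura_lerDl x y : le x (x + y).
Proof. by have := aura_lerD (aura_le_refl x) (aura_ge0 y); rewrite addr0. Qed.

Lemma aura_lerM2l x y z : le y z -> le (x * y) (x * z).
Proof. exact: aura_lerM (aura_le_refl x). Qed.

Lemma aura_lerM2r x y z : le y z -> le (y * x) (z * x).
Proof. by move/aura_lerM; apply; apply: aura_le_refl. Qed.

Lemma aura_lerX n x y : le x y -> le (x ^+ n) (y ^+ n).
Proof.
move=> lexy; elim: n => [|n IH]; first by rewrite !expr0 aura_le_refl.
by rewrite !exprS aura_lerM.
Qed.

Lemma aura_exprn_ge1 n x : le 1 x -> le 1 (x ^+ n).
Proof. by move/(aura_lerX n); rewrite expr1n. Qed.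

Lemma aura_ler_nat m n : (m <= n)%N -> le m%:R n%:R.
Proof. by move/subnK <-; rewrite natrD addrC aura_lerDl. Qed.

Lemma aura_ler_sum k (F : 'I_k -> R) y :
  (forall i, le (F i) y) -> le (\sum_(i < k) F i) (k%:R * y).
Proof.
elim: k F => [|k IH] F leFy; first by rewrite big_ord0 mul0r aura_le_refl.
by rewrite big_ord_recr mulrSr mulrDl mul1r aura_lerD ?IH.
Qed.

Lemma aura_mulf_neq0 (x y : R) : x <> 0 -> y <> 0 -> x * y <> 0.
Proof.
move=> /aura_invertible[x' xx'] /aura_invertible[y' yy'] xy0.
apply: aura_oner_neq0.
by rewrite -[1]mulr1 -{1}xx' -yy' mulrACA xy0 mul0r.
Qed.

Lemma aura_lerM2r_cancel x y z : z <> 0 -> le (x * z) (y * z) -> le x y.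
Proof.
move=> /aura_invertible[z' zz'] /(aura_lerM2r z').
by rewrite -!mulrA zz' !mulr1.
Qed.

Lemma aura_ge1_neq0 x : le 1 x -> x <> 0.
Proof.
by move=> le1x x0; apply: aura_oner_neq0; apply: aura_le_anti (aura_ge0 1); rewrite -x0.
Qed.

Lemma aura_lt_nge x y : lt_of le x y -> ~ le y x.
Proof. by case=> lexy neqxy leyx; apply/neqxy/aura_le_anti. Qed.

Lemma maxo_ge_l x y : le x (maxo le x y).
Proof. by rewrite /maxo; case: ifP => // _; apply: aura_le_refl. Qed.

Lemma maxo_ge_r x y : le y (maxo le x y).
Proof.
rewrite /maxo; case: ifP => [_|/negbT lexyN]; first exact: aura_le_refl.
by case: (aura_le_total x y) => // lexy; rewrite lexy in lexyN.
Qed.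

Lemma maxo_lub x y z : le x z -> le y z -> le (maxo le x y) z.
Proof. by rewrite /maxo; case: ifP. Qed.

Lemma maxo_idPl x y : le y x -> maxo le x y = x.
Proof. by rewrite /maxo; case: ifP => // lexy /(aura_le_anti lexy). Qed.

Hypothesis ht : tempered_growth le.

Lemma tempered_le_poly (P : {poly nat}) x y : P != 0 -> y <> 0 ->
  (forall n : nat, le (x ^+ n) (P.[n]%:R * y ^+ n)) -> le x y.
Proof.
move=> P0 /[dup] y0 /aura_invertible[y' yy'] lexyP.
suff /(aura_lerM2r y) : le (x * y') 1 by rewrite mul1r -mulrA (mulrC y') yy' mulr1.
apply: (ht P0) => n; rewrite exprMn.
have := aura_lerM2r (y' ^+ n) (lexyP n).
by rewrite -mulrA -[y ^+ n * _]exprMn yy' expr1n mulr1.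
Qed.

Lemma tempered_le_quadratic (c : nat) x y : (0 < c)%N -> y <> 0 ->
  (forall n : nat, le (x ^+ n) ((c * n.+1 ^ 2)%N%:R * y ^+ n)) -> le x y.
Proof.
move=> c0; pose P : {poly nat} := c%:P * ('X + 1) * ('X + 1).
have PE n : P.[n] = (c * n.+1 ^ 2)%N.
  rewrite /P !hornerM !hornerD hornerX !hornerC.
  by change (c * (n + 1) * (n + 1) = c * n.+1 ^ 2)%N; lia.
have P0 : P != 0 by apply/eqP => /(congr1 (horner^~ 0%N)); rewrite PE horner0; lia.
by move=> y0 lexy; apply: (tempered_le_poly P0 y0) => n; rewrite PE.
Qed.

Section HaloMorphism.

Variables (A : comPzRingType) (f : A -> R).
Hypothesis hf : halo_morphism_ring le f.

Lemma hmorph0 : f 0 = 0. Proof. by case: hf. Qed.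
Lemma hmorph1 : f 1 = 1. Proof. by case: hf. Qed.
Lemma hmorphD a b : le (f (a + b)) (f a + f b). Proof. by case: hf. Qed.
Lemma hmorphM a b : le (f (a * b)) (f a * f b). Proof. by case: hf. Qed.

Lemma hmorph_nat n : le (f n%:R) n%:R.
Proof.
elim: n => [|n IH]; first by rewrite hmorph0 aura_le_refl.
rewrite -addn1 !natrD; apply: aura_le_trans (hmorphD _ _) _.
by rewrite hmorph1 aura_lerD ?aura_le_refl.
Qed.

Lemma hmorph_sum k (G : 'I_k -> A) :
  le (f (\sum_(i < k) G i)) (\sum_(i < k) f (G i)).
Proof.
elim: k G => [|k IH] G; first by rewrite !big_ord0 hmorph0 aura_le_refl.
rewrite !big_ord_recr; apply: aura_le_trans (hmorphD _ _) _.
by rewrite aura_lerD ?IH ?aura_le_refl.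
Qed.

Lemma hmorph_nat_digits (b : nat) (C : R) : (0 < b)%N ->
  le (f b%:R) C -> le 1 C ->
  forall k m : nat, (m < b ^ k)%N -> le (f m%:R) ((k * b)%N%:R * C ^+ k).
Proof.
move=> b0 lebC le1C; elim=> [|k IH] m.
  by rewrite expn0 ltnS leqn0 => /eqP ->; rewrite hmorph0 aura_ge0.
rewrite expnSr => mlt.
have qlt : (m %/ b < b ^ k)%N by rewrite ltn_divLR.
rewrite {1}(divn_eq m b) natrD natrM mulSnr natrD mulrDl.
apply: aura_le_trans (hmorphD _ _) (aura_lerD _ _).
  apply: aura_le_trans (hmorphM _ _) _.
  by rewrite exprSr mulrA aura_lerM ?IH.
apply: aura_le_trans (hmorph_nat _) _.
apply: aura_le_trans (aura_ler_nat (ltnW (ltn_pmod m b0))) _.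
by have := aura_lerM2l b%:R (aura_exprn_ge1 k.+1 le1C); rewrite mulr1.
Qed.

Lemma hmorph_binomial (C : R) n i : le (f 2%:R) C -> le 1 C -> le C 2%:R ->
  le (f 'C(n, i)%:R) ((4 * n.+1)%N%:R * C ^+ n).
Proof.
move=> lef2C le1C leC2.
have binlt : ('C(n, i) < 2 ^ n.+1)%N.
  by apply: leq_ltn_trans (leq_bin_exp2 n i) _; rewrite ltn_exp2l.
apply: aura_le_trans (hmorph_nat_digits (isT : (0 < 2)%N) lef2C le1C binlt) _.
rewrite exprS mulrA (_ : (4 * n.+1)%N%:R = (n.+1 * 2)%N%:R * 2%:R); last first.
  by rewrite -natrM; congr _%:R; lia.
by apply: aura_lerM2r; apply: aura_lerM2l.
Qed.

Hypothesis pm : power_mult f.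

Lemma pre_archimedean a b :
  le (f (a + b)) (maxo le (f 2%:R) 1 * maxo le (f a) (f b)).
Proof.
set C := maxo le (f 2%:R) 1; set M := maxo le (f a) (f b).
have le1C : le 1 C := maxo_ge_r _ _.
have leC2 : le C 2%:R.
  by apply: maxo_lub; [apply: hmorph_nat | exact: (aura_ler_nat (isT : (1 <= 2)%N))].
have leaM : le (f a) M := maxo_ge_l _ _.
have lebM : le (f b) M := maxo_ge_r _ _.
have [M0|/eqP M0] := eqVneq M 0.
  move: leaM lebM; rewrite M0 mulr0 => lea0 leb0.
  have fa0 : f a = 0 := aura_le_anti lea0 (aura_ge0 _).
  have fb0 : f b = 0 := aura_le_anti leb0 (aura_ge0 _).
  by have := hmorphD a b; rewrite fa0 fb0 addr0.
apply: (tempered_le_quadratic (isT : (0 < 4)%N) (aura_mulf_neq0 (aura_ge1_neq0 le1C) M0)).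
move=> n; rewrite -[f (a + b) ^+ n]pm exprDn; apply: aura_le_trans (hmorph_sum _) _.
rewrite (_ : (4 * n.+1 ^ 2)%N%:R * (C * M) ^+ n =
             n.+1%:R * (M ^+ n * ((4 * n.+1)%N%:R * C ^+ n))); last first.
  by rewrite exprMn !natrM; ring.
apply: aura_ler_sum => i; rewrite -mulr_natr.
have lebin := hmorph_binomial n i (maxo_ge_l _ _) le1C leC2.
apply: aura_le_trans (hmorphM _ _) (aura_lerM _ lebin).
apply: aura_le_trans (hmorphM _ _) _.
have lein : (i <= n)%N by rewrite -ltnS.
rewrite !pm -[in M ^+ n](subnK lein) exprD.
by rewrite aura_lerM ?aura_lerX.
Qed.

Lemma hmorphN a : f (- a) = f a.
Proof.
have u2 : f (-1) * f (-1) = 1 by rewrite -expr2 -pm sqrrN expr1n hmorph1.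
have u1 : f (-1) = 1.
  case: (aura_le_total (f (-1)) 1) => leu.
    by apply: (aura_le_anti leu); have := aura_lerM2l (f (-1)) leu; rewrite u2 mulr1.
  by apply: (aura_le_anti _ leu); have := aura_lerM2l (f (-1)) leu; rewrite u2 mulr1.
apply: aura_le_anti.
  by have := hmorphM (-1) a; rewrite u1 mul1r mulN1r.
by have := hmorphM (-1) (- a); rewrite u1 mul1r mulN1r opprK.
Qed.

Lemma hmorph_intr (n : int) : f n%:~R = f `|n|%N%:R.
Proof. by case: n => k //; rewrite NegzE mulrNz hmorphN. Qed.

Lemma hmorph_nat_le_max m n : (2 <= n)%N -> (m <= n)%N ->
  le (f m%:R) (maxo le (f n%:R) 1).
Proof.
move=> n2 lemn; set C := maxo le (f n%:R) 1.
have le1C : le 1 C := maxo_ge_r _ _.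
have leCn : le C n%:R.
  by apply: maxo_lub; [apply: hmorph_nat | exact: (aura_ler_nat (ltnW n2))].
have n0 : (0 < n * n)%N by rewrite muln_gt0 andbb ltnW.
apply: (tempered_le_quadratic n0 (aura_ge1_neq0 le1C)) => j.
have mjlt : (m ^ j < n ^ j.+1)%N.
  apply: leq_ltn_trans (_ : m ^ j <= n ^ j)%N _.
    by case: j => // j; rewrite leq_exp2r.
  by rewrite ltn_exp2l.
rewrite -pm -natrX.
apply: aura_le_trans (hmorph_nat_digits (ltnW n2) (maxo_ge_l _ _) le1C mjlt) _.
rewrite exprS mulrA; apply: aura_le_trans (aura_lerM2r _ (aura_lerM2l _ leCn)) _.
by rewrite -natrM; apply/aura_lerM2r/aura_ler_nat; nia.
Qed.

Section TwoAboveOne.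

Hypothesis h2 : lt_of le 1 (f 2%:R).

Lemma hmorph_nat_ge1 n : (0 < n)%N -> le 1 (f n%:R).
Proof.
case: n => [|[|n]] // _; first by rewrite hmorph1 aura_le_refl.
case: (aura_le_total 1 (f n.+2%:R)) => // len1.
have := hmorph_nat_le_max (isT : (2 <= n.+2)%N) (isT : (2 <= n.+2)%N).
by rewrite /maxo len1 => /(aura_lt_nge h2).
Qed.

Lemma hmorph_nat_mono m n : (m <= n)%N -> le (f m%:R) (f n%:R).
Proof.
case: m => [|m] lemn; first by rewrite hmorph0 aura_ge0.
case: (leqP 2 n) => [n2|]; last first.
  by case: n lemn => [|[|]] //; case: m => // _ _; apply: aura_le_refl.
rewrite -[f n%:R](maxo_idPl (hmorph_nat_ge1 (ltnW n2))).
exact: hmorph_nat_le_max.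
Qed.

Lemma hmorph_natM m n : f (m * n)%N%:R = f m%:R * f n%:R.
Proof.
case: m => [|m]; first by rewrite mul0n hmorph0 mul0r.
case: n => [|n]; first by rewrite muln0 hmorph0 mulr0.
apply: aura_le_anti; first by rewrite natrM hmorphM.
have mn0 : (0 < m.+1 * n.+1)%N by rewrite muln_gt0.
have le1mn := hmorph_nat_ge1 mn0.
apply: (tempered_le_quadratic (isT : (0 < 4)%N) (aura_ge1_neq0 le1mn)) => j.
have /andP[lem ltm] := trunc_log_bounds (isT : (1 < 2)%N) (expn_gt0 m.+1 j).
have /andP[len ltn] := trunc_log_bounds (isT : (1 < 2)%N) (expn_gt0 n.+1 j).
set e := trunc_log 2 _ in lem ltm; set e' := trunc_log 2 _ in len ltn.
have le_m : le (f m.+1%:R ^+ j) (f 2%:R ^+ e.+1).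
  by rewrite -!pm -!natrX; apply/hmorph_nat_mono/ltnW.
have le_n : le (f n.+1%:R ^+ j) (f 2%:R ^+ e'.+1).
  by rewrite -!pm -!natrX; apply/hmorph_nat_mono/ltnW.
have le_mn : le (f 2%:R ^+ (e + e')) (f (m.+1 * n.+1)%N%:R ^+ j).
  by rewrite -!pm -!natrX; apply: hmorph_nat_mono; rewrite expnD expnMn leq_mul.
have le_4 : le (f 2%:R ^+ 2) (4 * j.+1 ^ 2)%N%:R.
  apply: aura_le_trans (aura_lerX 2 (hmorph_nat 2)) _.
  by rewrite -natrX; apply: aura_ler_nat; nia.
rewrite exprMn; apply: aura_le_trans (aura_lerM le_m le_n) _.
rewrite -exprD addSn addnS !exprS mulrA -expr2.
exact: aura_lerM le_4 le_mn.
Qed.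

Lemma hmorph_nat_strict m n : (m < n)%N -> ~ le (f n%:R) (f m%:R).
Proof.
move=> ltmn lenm; have le1n := hmorph_nat_ge1 (leq_ltn_trans (leq0n m) ltmn).
case: m ltmn lenm => [|m] ltmn lenm.
  rewrite hmorph0 in lenm; apply: aura_oner_neq0.
  exact: aura_le_anti (aura_le_trans le1n lenm) (aura_ge0 1).
have gap : (2 * m.+1 ^ m.+1 <= n ^ m.+1)%N.
  by apply: leq_trans (leq_double_expnS (ltn0Sn m)) _; rewrite leq_exp2r.
have le1mX := aura_exprn_ge1 m.+1 (hmorph_nat_ge1 (ltn0Sn m)).
apply: (aura_lt_nge h2); apply: aura_lerM2r_cancel (aura_ge1_neq0 le1mX) _.
rewrite mul1r; apply: aura_le_trans (aura_lerX m.+1 lenm).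
by have := hmorph_nat_mono gap; rewrite hmorph_natM !natrX !pm.
Qed.

Lemma hmorph_nat_leE m n : le (f m%:R) (f n%:R) <-> (m <= n)%N.
Proof.
split; last exact: hmorph_nat_mono.
by move=> lemn; case: leqP => // ltnm; case: (hmorph_nat_strict ltnm lemn).
Qed.

End TwoAboveOne.

End HaloMorphism.

End PositiveTotallyOrderedAura.

Lemma abs_inftyE (n : int) : abs_infty n = `|n|%N%:R.
Proof. by rewrite /abs_infty maxrN -abszE. Qed.

Theorem theorem2p8 (A : comPzRingType) (R : comPzSemiRingType) (le : rel R)
  (f : A -> R) :
  pos_tot_aura le -> tempered_growth le ->
  gen_seminorm le f -> power_mult f ->
  (forall a b : A,
     le (f (a + b)) (maxo le (f 2%:R) 1 * maxo le (f a) (f b))) /\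
  (lt_of le 1 (f 2%:R) ->
     mult_equiv le rat_le (fun n : int => f (n%:~R)) abs_infty).
Proof.
move=> hR ht [_ hf] pm; split; first exact: pre_archimedean.
move=> h2; have fZE := hmorph_intr hR hf pm; have fNM := hmorph_natM hR ht hf pm h2.
have fN_leE := hmorph_nat_leE hR ht hf pm h2.
by split=> a b c /=; rewrite !fZE -fNM /rat_le !abs_inftyE -natrM ler_nat => /fN_leE.
Qed.
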